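(* Let $I$ be a finite nonempty set and let $\phi=\bigwedge_{i\in I}\phi_i$, where each $\phi_i$ is a formula of the intuitionistic propositional calculus that is disjunctive in the variable $x$. Let $N$ be the number of distinct head subformulas and $M$ the number of distinct side subformulas occurring in any of the $\phi_i$. Then $\rho(\phi)\le (N+1)(M+1)$.
   Context: Formulas of the intuitionistic propositional calculus (IPC) are built from propositional variables, $\top,\bot,\wedge,\vee,\to$. For a formula $\phi$ containing the variable $x$, define $\phi^0=x$ and $\phi^{n+1}=\phi[\phi^n/x]$ (substitution of $\phi^n$ for $x$ in $\phi$). The Ruitenburg number $\rho(\phi)$ is the least $n\ge 0$ such that $\phi^{n+2}$ and $\phi^n$ are provably equivalent in IPC. A formula is disjunctive in $x$ if it is generated by the grammar $\phi ::= x \mid \alpha\to\phi \mid \beta\vee\phi \mid \phi\vee\phi$, where $\alpha,\beta$ range over IPC formulas not containing $x$ (disjunctions taken up to commutativity). In the parse of a disjunctive formula, each formula $\alpha$ used in a production $\alpha\to\phi'$ is a head subformula, and each formula $\beta$ used in a production $\beta\vee\phi'$ is a side subformula. *)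

From Stdlib Require Import List Arith.
Import ListNotations.

Inductive form : Type :=
| Var : nat -> form
| Top : form
| Bot : form
| And : form -> form -> form
| Or  : form -> form -> form
| Imp : form -> form -> form.

Definition form_eq_dec : forall a b : form, {a = b} + {a <> b}.
Proof. decide equality; apply Nat.eq_dec. Defined.

Inductive nd : list form -> form -> Prop :=
| nd_ax   : forall G A, In A G -> nd G A
| nd_topI : forall G, nd G Top
| nd_botE : forall G A, nd G Bot -> nd G A
| nd_andI : forall G A B, nd G A -> nd G B -> nd G (And A B)
| nd_andE1 : forall G A B, nd G (And A B) -> nd G A
| nd_andE2 : forall G A B, nd G (And A B) -> nd G B
| nd_orI1 : forall G A B, nd G A -> nd G (Or A B)
| nd_orI2 : forall G A B, nd G B -> nd G (Or A B)
| nd_orE  : forall G A B C, nd G (Or A B) -> nd (A :: G) C -> nd (B :: G) C -> nd G C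
| nd_impI : forall G A B, nd (A :: G) B -> nd G (Imp A B)
| nd_impE : forall G A B, nd G (Imp A B) -> nd G A -> nd G B.

Definition provable (A : form) : Prop := nd [] A.

Definition ipc_equiv (A B : form) : Prop := provable (Imp A B) /\ provable (Imp B A).

Fixpoint occurs (x : nat) (A : form) : bool :=
  match A with
  | Var y => Nat.eqb x y
  | Top | Bot => false
  | And A B | Or A B | Imp A B => occurs x A || occurs x B
  end.

Fixpoint subst (x : nat) (B : form) (A : form) : form :=
  match A with
  | Var y => if Nat.eqb x y then B else Var y
  | Top => Top
  | Bot => Bot
  | And A1 A2 => And (subst x B A1) (subst x B A2)
  | Or A1 A2 => Or (subst x B A1) (subst x B A2)
  | Imp A1 A2 => Imp (subst x B A1) (subst x B A2)
  end.

Fixpoint iter_form (x : nat) (phi : form) (n : nat) : form :=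
  match n with
  | 0 => Var x
  | S n => subst x (iter_form x phi n) phi
  end.

(* rho(phi) <= k : the least n with phi^(n+2) ~ phi^n is at most k, i.e.
   some n <= k satisfies phi^(n+2) ~ phi^n. *)
Definition ruitenburg_le (x : nat) (phi : form) (k : nat) : Prop :=
  exists n, n <= k /\ ipc_equiv (iter_form x phi (n + 2)) (iter_form x phi n).

(* Disjunctive formulas in x:  phi ::= x | alpha -> phi | beta \/ phi | phi \/ phi
   (x not in alpha, beta; disjunction up to commutativity). *)
Inductive disjunctive (x : nat) : form -> Prop :=
| dj_var : disjunctive x (Var x)
| dj_imp : forall a p, occurs x a = false -> disjunctive x p -> disjunctive x (Imp a p)
| dj_sideL : forall b p, occurs x b = false -> disjunctive x p -> disjunctive x (Or b p)
| dj_sideR : forall b p, occurs x b = false -> disjunctive x p -> disjunctive x (Or p b)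
| dj_or : forall p q, disjunctive x p -> disjunctive x q -> disjunctive x (Or p q).

(* Every disjunctive formula contains x, so its parse is unique: in a
   disjunction, a disjunct not containing x is a side subformula. *)
Fixpoint heads (x : nat) (A : form) : list form :=
  match A with
  | Imp a p => a :: heads x p
  | Or p q =>
      if occurs x p then (if occurs x q then heads x p ++ heads x q else heads x p)
      else heads x q
  | _ => []
  end.

Fixpoint sides (x : nat) (A : form) : list form :=
  match A with
  | Imp a p => sides x p
  | Or p q =>
      if occurs x p then (if occurs x q then sides x p ++ sides x q else q :: sides x p)
      else p :: sides x q
  | _ => []
  end.

Fixpoint bigAnd (l : list form) : form :=
  match l with
  | [] => Top
  | [a] => a
  | a :: l => And a (bigAnd l)
  end.

Definition num_distinct (l : list form) : nat := length (nodup form_eq_dec l).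

(* The iterates of phi stabilise from step N+1, which gives the bound
   (sides never matter).  Let Z := phi[Y].  In phi[Z], every occurrence of
   x that is not below an implication can be absorbed: plugging W into those
   occurrences (and Y below implications) gives a formula entailing the one
   with Bot in place of W, or W; with W := Z both disjuncts entail Z.  An
   occurrence below a head a may be replaced by Y as soon as Y and Z are
   equivalent under the hypothesis a.  Hence phi[Z] ~ Z whenever
   Y ~ phi[Y] under every head.  Under the hypothesis a, the implications
   a -> psi collapse to psi, so phi is equivalent to a formula with one head
   less; induction on the number of heads provides, under each head, the
   stabilisation of the iterates needed to apply the previous step. *)

From Stdlib Require Import List Arith Lia Bool.
Import ListNotations.

Ltac hyp := apply nd_ax; simpl; tauto.
Ltac incl_tac := intros ? ?; simpl in *; tauto.

Lemma incl_cons_cons {A} (a : A) G G' : incl G G' -> incl (a :: G) (a :: G').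
Proof. intros H; apply incl_cons; [left; auto | apply incl_tl; auto]. Qed.

Lemma nd_weaken G A : nd G A -> forall G', incl G G' -> nd G' A.
Proof.
  intros H; induction H; intros G' Hi.
  - apply nd_ax; auto.
  - apply nd_topI.
  - apply nd_botE; auto.
  - apply nd_andI; auto.
  - eapply nd_andE1; eauto.
  - eapply nd_andE2; eauto.
  - apply nd_orI1; auto.
  - apply nd_orI2; auto.
  - eapply nd_orE; [eauto | apply IHnd2 | apply IHnd3]; apply incl_cons_cons; auto.
  - apply nd_impI; apply IHnd; apply incl_cons_cons; auto.
  - eapply nd_impE; eauto.
Qed.

Lemma nd_cut G A B : nd G A -> nd (A :: G) B -> nd G B.
Proof. intros H1 H2; eapply nd_impE; [apply nd_impI; exact H2 | exact H1]. Qed.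

Definition entails G A B := nd (A :: G) B.
Definition equiv G A B := entails G A B /\ entails G B A.

Lemma entails_apply G G' A B : entails G A B -> nd G' A -> incl G G' -> nd G' B.
Proof.
  intros H1 H2 Hi; eapply nd_cut; [exact H2|].
  eapply nd_weaken; [exact H1|]. apply incl_cons_cons; auto.
Qed.

Lemma entails_refl G A : entails G A A.
Proof. unfold entails; hyp. Qed.

Lemma entails_trans G A B C : entails G A B -> entails G B C -> entails G A C.
Proof. intros H1 H2; eapply entails_apply; [exact H2 | exact H1 | incl_tac]. Qed.

Lemma equiv_refl G A : equiv G A A.
Proof. split; apply entails_refl. Qed.

Lemma equiv_sym G A B : equiv G A B -> equiv G B A.
Proof. intros [? ?]; split; auto. Qed.

Lemma equiv_trans G A B C : equiv G A B -> equiv G B C -> equiv G A C.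
Proof. intros [? ?] [? ?]; split; eapply entails_trans; eauto. Qed.

Lemma entails_bot G A : entails G Bot A.
Proof. unfold entails; apply nd_botE; hyp. Qed.

Lemma entails_and G A A' B B' :
  entails G A A' -> entails G B B' -> entails G (And A B) (And A' B').
Proof.
  intros H1 H2; apply nd_andI.
  - eapply entails_apply; [exact H1 | eapply nd_andE1; hyp | incl_tac].
  - eapply entails_apply; [exact H2 | eapply nd_andE2; hyp | incl_tac].
Qed.

Lemma entails_or G A A' B B' :
  entails G A A' -> entails G B B' -> entails G (Or A B) (Or A' B').
Proof.
  intros H1 H2; eapply nd_orE; [hyp | |].
  - apply nd_orI1; eapply entails_apply; [exact H1 | hyp | incl_tac].
  - apply nd_orI2; eapply entails_apply; [exact H2 | hyp | incl_tac].
Qed.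

Lemma entails_imp G A A' B B' :
  entails G A' A -> entails G B B' -> entails G (Imp A B) (Imp A' B').
Proof.
  intros H1 H2; apply nd_impI.
  eapply entails_apply; [exact H2 | | incl_tac].
  eapply nd_impE; [hyp |]. eapply entails_apply; [exact H1 | hyp | incl_tac].
Qed.

Lemma equiv_imp_hyp G a B B' : equiv (a :: G) B B' -> equiv G (Imp a B) (Imp a B').
Proof.
  intros [H1 H2]; split; apply nd_impI;
    [eapply entails_apply; [exact H1 | | incl_tac] | eapply entails_apply; [exact H2 | | incl_tac]];
    eapply nd_impE; hyp.
Qed.

Lemma equiv_nil_ipc_equiv A B : equiv [] A B -> ipc_equiv A B.
Proof. intros [H1 H2]; split; apply nd_impI; auto. Qed.

Lemma subst_equiv x G Y Y' C : equiv G Y Y' -> equiv G (subst x Y C) (subst x Y' C).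
Proof.
  intros HY; induction C; simpl.
  - destruct (Nat.eqb x n); auto using equiv_refl.
  - apply equiv_refl.
  - apply equiv_refl.
  - destruct IHC1, IHC2; split; apply entails_and; auto.
  - destruct IHC1, IHC2; split; apply entails_or; auto.
  - destruct IHC1, IHC2; split; apply entails_imp; auto.
Qed.

Lemma subst_fresh x Y C : occurs x C = false -> subst x Y C = C.
Proof.
  induction C; simpl; intros H; auto;
    try (apply orb_false_iff in H as [? ?]; rewrite IHC1, IHC2; auto).
  rewrite H; auto.
Qed.

(* [x_reachable x F]: [Y] entails [F[Y]], by descending through conjunctions,
   one disjunct of each disjunction and the conclusion of implications. *)
Fixpoint x_reachable x F : Prop :=
  match F with
  | Var v => v = x
  | Imp _ p => x_reachable x p
  | And p q => x_reachable x p /\ x_reachable x q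
  | Or p q => x_reachable x p \/ x_reachable x q
  | _ => False
  end.

Fixpoint fresh_heads x F : Prop :=
  match F with
  | Imp a p => occurs x a = false /\ fresh_heads x p
  | And p q | Or p q => fresh_heads x p /\ fresh_heads x q
  | _ => True
  end.

Fixpoint live_heads x F : list form :=
  match F with
  | Imp a p => if occurs x p then a :: live_heads x p else []
  | And p q | Or p q => live_heads x p ++ live_heads x q
  | _ => []
  end.

Fixpoint drop_head a F :=
  match F with
  | Imp c p => if form_eq_dec c a then drop_head a p else Imp c (drop_head a p)
  | And p q => And (drop_head a p) (drop_head a q)
  | Or p q => Or (drop_head a p) (drop_head a q)
  | _ => F
  end.

Lemma x_reachable_subst_inflationary x F G Y :
  x_reachable x F -> entails G Y (subst x Y F).
Proof.
  revert G; induction F; simpl; intros G Hr; try contradiction.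
  - subst n; rewrite Nat.eqb_refl; apply entails_refl.
  - destruct Hr; apply nd_andI; [apply IHF1 | apply IHF2]; auto.
  - destruct Hr; [apply nd_orI1; apply IHF1 | apply nd_orI2; apply IHF2]; auto.
  - apply nd_impI. eapply entails_apply; [apply (IHF2 G Hr) | hyp | incl_tac].
Qed.

Lemma fresh_heads_drop_head x a F : fresh_heads x F -> fresh_heads x (drop_head a F).
Proof. induction F; simpl; intuition; destruct form_eq_dec; simpl; intuition. Qed.

Lemma x_reachable_drop_head x a F : x_reachable x F -> x_reachable x (drop_head a F).
Proof. induction F; simpl; intuition; destruct form_eq_dec; simpl; intuition. Qed.

Lemma occurs_drop_head x a F : occurs x (drop_head a F) = true -> occurs x F = true.
Proof.
  induction F; simpl; intros H; auto;
    try (apply orb_true_iff in H; apply orb_true_iff; intuition).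
  destruct form_eq_dec; simpl in *; apply orb_true_iff; [intuition |].
  apply orb_true_iff in H; intuition.
Qed.

Lemma live_heads_fresh x F : occurs x F = false -> live_heads x F = [].
Proof.
  induction F; simpl; intros H; auto;
    apply orb_false_iff in H as [H1 H2]; try (rewrite IHF1, IHF2; auto).
  rewrite H2; auto.
Qed.

Lemma live_heads_drop_head x a F c :
  In c (live_heads x (drop_head a F)) -> In c (live_heads x F) /\ c <> a.
Proof.
  induction F; simpl; intros H; try contradiction.
  1, 2: apply in_app_or in H as [H | H];
        [apply IHF1 in H as [? ?] | apply IHF2 in H as [? ?]]; split; auto using in_or_app.
  destruct form_eq_dec as [-> | Hne].
  - destruct (occurs x F2) eqn:E.
    + apply IHF2 in H; simpl; intuition.
    + destruct (occurs x (drop_head a F2)) eqn:E'.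
      * apply occurs_drop_head in E'; congruence.
      * rewrite (live_heads_fresh _ _ E') in H; contradiction.
  - simpl in H. destruct (occurs x (drop_head a F2)) eqn:E'; [| contradiction].
    rewrite (occurs_drop_head _ _ _ E'). destruct H as [<- | H].
    + simpl; auto.
    + apply IHF2 in H; simpl; intuition.
Qed.

Lemma subst_drop_head_equiv x a F G Y : fresh_heads x F ->
  equiv (a :: G) (subst x Y F) (subst x Y (drop_head a F)).
Proof.
  induction F; simpl; intros Hf; try apply equiv_refl.
  - destruct Hf as [Hf1 Hf2]; destruct (IHF1 Hf1), (IHF2 Hf2);
      split; apply entails_and; auto.
  - destruct Hf as [Hf1 Hf2]; destruct (IHF1 Hf1), (IHF2 Hf2);
      split; apply entails_or; auto.
  - destruct Hf as [Ha Hp]. destruct (IHF2 Hp) as [H1 H2].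
    rewrite (subst_fresh _ _ _ Ha).
    destruct form_eq_dec as [-> | Hne]; simpl; [split |].
    + eapply entails_apply; [exact H1 | eapply nd_impE; hyp | incl_tac].
    + apply nd_impI. eapply entails_apply; [exact H2 | hyp | incl_tac].
    + rewrite (subst_fresh _ _ _ Ha); split; apply entails_imp; auto using entails_refl.
Qed.

Lemma iter_drop_head_equiv x a F G n : fresh_heads x F ->
  equiv (a :: G) (iter_form x F n) (iter_form x (drop_head a F) n).
Proof.
  intros Hf; induction n; simpl.
  - apply equiv_refl.
  - eapply equiv_trans; [apply subst_drop_head_equiv; auto |].
    apply subst_equiv; auto.
Qed.

Fixpoint subst_outer x Y W F :=
  match F with
  | Var v => if Nat.eqb x v then W else Var v
  | And p q => And (subst_outer x Y W p) (subst_outer x Y W q)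
  | Or p q => Or (subst_outer x Y W p) (subst_outer x Y W q)
  | Imp _ _ => subst x Y F
  | Top => Top
  | Bot => Bot
  end.

Lemma subst_outer_diag x Y F : subst_outer x Y Y F = subst x Y F.
Proof. induction F; simpl; congruence. Qed.

Lemma subst_outer_mono x G Y W W' F :
  entails G W W' -> entails G (subst_outer x Y W F) (subst_outer x Y W' F).
Proof.
  intros H; induction F as [n | | | | |]; simpl; auto using entails_refl, entails_and, entails_or.
  destruct (Nat.eqb x n); auto using entails_refl.
Qed.

Lemma subst_outer_absorb x G Y W F :
  entails G (subst_outer x Y W F) (Or (subst_outer x Y Bot F) W).
Proof.
  unfold entails; induction F; simpl.
  - destruct (Nat.eqb x n); [apply nd_orI2 | apply nd_orI1]; hyp.
  - apply nd_orI1; apply nd_topI.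
  - apply nd_orI1; hyp.
  - eapply nd_orE; [eapply entails_apply; [exact IHF1 | eapply nd_andE1; hyp | incl_tac] | |].
    + eapply nd_orE; [eapply entails_apply; [exact IHF2 | eapply nd_andE2; hyp | incl_tac] | |].
      * apply nd_orI1; apply nd_andI; hyp.
      * apply nd_orI2; hyp.
    + apply nd_orI2; hyp.
  - eapply nd_orE; [hyp | |].
    + eapply nd_orE; [eapply entails_apply; [exact IHF1 | hyp | incl_tac] | |].
      * apply nd_orI1; apply nd_orI1; hyp.
      * apply nd_orI2; hyp.
    + eapply nd_orE; [eapply entails_apply; [exact IHF2 | hyp | incl_tac] | |].
      * apply nd_orI1; apply nd_orI2; hyp.
      * apply nd_orI2; hyp.
  - apply nd_orI1; hyp.
Qed.

Lemma subst_outer_equiv_under_heads x G Y Y' W F : fresh_heads x F ->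
  (forall a, In a (live_heads x F) -> equiv (a :: G) Y Y') ->
  equiv G (subst_outer x Y W F) (subst_outer x Y' W F).
Proof.
  induction F; simpl; intros Hf Ha; try apply equiv_refl.
  1, 2: destruct Hf as [Hf1 Hf2];
        destruct (IHF1 Hf1 (fun a h => Ha a (in_or_app _ _ _ (or_introl h))));
        destruct (IHF2 Hf2 (fun a h => Ha a (in_or_app _ _ _ (or_intror h))));
        split; auto using entails_and, entails_or.
  destruct Hf as [Hc _]. rewrite !(subst_fresh _ _ _ Hc).
  destruct (occurs x F2) eqn:E.
  - apply equiv_imp_hyp, subst_equiv, Ha; left; auto.
  - rewrite !(subst_fresh _ _ _ E). apply equiv_refl.
Qed.

Lemma subst_idem_under_heads x G F Y : x_reachable x F -> fresh_heads x F ->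
  (forall a, In a (live_heads x F) -> equiv (a :: G) Y (subst x Y F)) ->
  equiv G (subst x (subst x Y F) F) (subst x Y F).
Proof.
  intros Hr Hf Ha. set (Z := subst x Y F).
  split; [| apply x_reachable_subst_inflationary; auto].
  rewrite <- subst_outer_diag.
  eapply entails_trans.
  { apply (subst_outer_equiv_under_heads x G Z Y Z F Hf).
    intros a h; apply equiv_sym, Ha, h. }
  eapply entails_trans; [apply subst_outer_absorb |].
  eapply entails_trans.
  { apply entails_or; [apply subst_outer_mono, (entails_bot G Y) | apply entails_refl]. }
  rewrite subst_outer_diag. fold Z. unfold entails. eapply nd_orE; hyp.
Qed.

Lemma iter_stable_of_heads x F G k : x_reachable x F -> fresh_heads x F ->
  (forall a, In a (live_heads x F) -> forall m, k <= m ->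
     equiv (a :: G) (iter_form x F m) (iter_form x F k)) ->
  forall m, S k <= m -> equiv G (iter_form x F m) (iter_form x F (S k)).
Proof.
  intros Hr Hf Hk.
  assert (step : forall m, k <= m ->
            equiv G (iter_form x F (S (S m))) (iter_form x F (S m))).
  { intros m Hm; apply subst_idem_under_heads; auto. intros a h.
    eapply equiv_trans; [apply (Hk a h m Hm) |].
    apply equiv_sym, (Hk a h (S m)); lia. }
  intros m Hm. replace m with (S k + (m - S k)) by lia.
  induction (m - S k) as [| d IH].
  - rewrite Nat.add_0_r; apply equiv_refl.
  - rewrite Nat.add_succ_r. eapply equiv_trans; [| exact IH]. apply (step (k + d)); lia.
Qed.

Lemma iter_stable x k : forall L F G, length L <= k ->
  x_reachable x F -> fresh_heads x F -> incl (live_heads x F) L ->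
  forall m, S k <= m -> equiv G (iter_form x F m) (iter_form x F (S k)).
Proof.
  induction k as [| k IH]; intros L F G HL Hr Hf Hi; apply iter_stable_of_heads; auto.
  - intros a h; apply Hi in h. destruct L; simpl in *; [contradiction | lia].
  - intros a h m Hm.
    assert (HaL := Hi a h).
    assert (HL' : length (remove form_eq_dec a L) <= k)
      by (pose proof (remove_length_lt form_eq_dec L a HaL); lia).
    assert (Hi' : incl (live_heads x (drop_head a F)) (remove form_eq_dec a L)).
    { intros c hc; apply live_heads_drop_head in hc as [? ?]; apply in_in_remove; auto. }
    eapply equiv_trans; [apply iter_drop_head_equiv; auto |].
    eapply equiv_trans; [apply (IH _ _ (a :: G) HL'); eauto using
      x_reachable_drop_head, fresh_heads_drop_head |].
    apply equiv_sym, iter_drop_head_equiv; auto.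
Qed.

Lemma fresh_fresh_heads x b : occurs x b = false -> fresh_heads x b.
Proof. induction b; simpl; intros H; auto; apply orb_false_iff in H; intuition. Qed.

Lemma disjunctive_occurs x D : disjunctive x D -> occurs x D = true.
Proof.
  induction 1; simpl; try rewrite IHdisjunctive; try rewrite IHdisjunctive1;
    rewrite ?orb_true_r; auto using Nat.eqb_refl.
Qed.

Lemma disjunctive_reachable_fresh x D :
  disjunctive x D -> x_reachable x D /\ fresh_heads x D.
Proof. induction 1; simpl; intuition; apply fresh_fresh_heads; auto. Qed.

Lemma live_heads_disjunctive x D : disjunctive x D -> incl (live_heads x D) (heads x D).
Proof.
  induction 1; simpl.
  - incl_tac.
  - rewrite (disjunctive_occurs _ _ H0). apply incl_cons_cons; auto.
  - rewrite (live_heads_fresh _ _ H), H; auto.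
  - rewrite (live_heads_fresh _ _ H), H, (disjunctive_occurs _ _ H0), app_nil_r; auto.
  - rewrite (disjunctive_occurs _ _ H), (disjunctive_occurs _ _ H0).
    apply incl_app_app; auto.
Qed.

Lemma bigAnd_reachable_fresh x ps : ps <> [] ->
  (forall p, In p ps -> x_reachable x p /\ fresh_heads x p) ->
  x_reachable x (bigAnd ps) /\ fresh_heads x (bigAnd ps).
Proof.
  induction ps as [| a [| b l] IH]; intros Hne H; [congruence | apply H; left; auto |].
  assert (Ha := H a (or_introl eq_refl)).
  assert (Hl : x_reachable x (bigAnd (b :: l)) /\ fresh_heads x (bigAnd (b :: l)))
    by (apply IH; [congruence | intros p hp; apply H; right; auto]).
  change (bigAnd (a :: b :: l)) with (And a (bigAnd (b :: l))); simpl; intuition.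
Qed.

Lemma live_heads_bigAnd x ps :
  incl (live_heads x (bigAnd ps)) (flat_map (live_heads x) ps).
Proof.
  induction ps as [| a [| b l] IH]; [simpl; incl_tac | simpl; rewrite !app_nil_r; incl_tac |].
  change (bigAnd (a :: b :: l)) with (And a (bigAnd (b :: l))).
  apply incl_app_app; [incl_tac | exact IH].
Qed.

Theorem mainTheorem1 (x : nat) (phis : list form) :
  phis <> [] ->
  (forall p, In p phis -> disjunctive x p) ->
  ruitenburg_le x (bigAnd phis)
    ((num_distinct (flat_map (heads x) phis) + 1) *
     (num_distinct (flat_map (sides x) phis) + 1)).
Proof.
  intros Hne Hd.
  destruct (bigAnd_reachable_fresh x phis Hne
              (fun p h => disjunctive_reachable_fresh x p (Hd p h))) as [Hr Hf].
  set (L := nodup form_eq_dec (flat_map (heads x) phis)).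
  assert (Hi : incl (live_heads x (bigAnd phis)) L).
  { intros c hc. apply live_heads_bigAnd, in_flat_map in hc as [p [hp hc]].
    apply nodup_In, in_flat_map. exists p; split; auto.
    apply (live_heads_disjunctive x p (Hd p hp)); auto. }
  exists (S (length L)); split.
  - unfold num_distinct; fold L; nia.
  - apply equiv_nil_ipc_equiv.
    apply (iter_stable x (length L) L _ [] (le_n _) Hr Hf Hi); lia.
Qed.
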